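(* For every constant $B>0$, any number of training samples $n\ge1$ and any time $t\ge1$, with probability at least $1-\frac1{c_1}$ over the random initialization, the empirical Rademacher complexity satisfies $$\frac1n\mathbb{E}_{\xi\in\{\pm1\}^n}\Big[\sup_{\max_{r\in[m]}\|w_{i,r}^{(t)}\|_2,\,|b_{i,r}^{(t)}|\le B}\ \sum_{j=1}^n\xi_jN\big((x_{1:i})_j;\theta^{(t)}_i\big)\Big]\le\frac{8c_1\epsilon_aBm\sqrt{2\log m}}{\sqrt n},$$ where $(x_{1:i})_j$ denotes the first $i$ coordinates of the $j$-th training example.
   Context: Fix $m\ge2$, $\epsilon_a>0$, a constant $c_1>10$, $i\in[d]$, and training points $x^{(1)},\dots,x^{(n)}\in\mathbb{R}^d$ with $\|x^{(j)}\|_2\le1$. For $\|x_{1:i}\|_2\le1$, $\hat x_{1:i}=(x_1,\dots,x_i,\sqrt{1-\|x_{1:i}\|_2^2})$. Random frozen initial parameters $a_{i,r}\sim\mathcal N(0,\epsilon_a^2)$, $\bar w_{i,r}\sim\mathcal N(0,\frac1mI_{i+1})$, $\bar b_{i,r}\sim\mathcal N(0,\frac1m)$, independent. $N(x_{1:i};\theta_i)=\sum_{r=1}^ma_{i,r}\max\{0,\langle\bar w_{i,r}+w_{i,r},\hat x_{1:i}\rangle+\bar b_{i,r}+b_{i,r}\}$ with offsets $\theta_i=(w_{i,r},b_{i,r})_r$; the supremum is over all offsets $\theta_i^{(t)}=(w^{(t)}_{i,r},b^{(t)}_{i,r})_r$ satisfying the stated bounds. $\xi$ is uniform on $\{\pm1\}^n$.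 *)

From HB Require Import structures.
From mathcomp Require Import all_boot all_order all_algebra.
From mathcomp Require Import all_classical all_reals all_analysis.
Set Implicit Arguments. Unset Strict Implicit. Unset Printing Implicit Defensive.
Import Order.TTheory GRing.Theory Num.Theory.
Local Open Scope classical_set_scope.
Local Open Scope ring_scope.

Section defs.
Context {R : realType}.

Definition norm2 k (v : 'rV[R]_k) : R := Num.sqrt (\sum_(l < k) v 0 l ^+ 2).

Definition dotv k (u v : 'rV[R]_k) : R := \sum_(l < k) u 0 l * v 0 l.

Definition xprefix d i (hid : (i <= d)%N) (x : 'rV[R]_d) : 'rV[R]_i :=
  \row_(l < i) x 0 (widen_ord hid l).

Definition xhat i (x : 'rV[R]_i) : 'rV[R]_(i + 1) :=
  row_mx x (const_mx (Num.sqrt (1 - norm2 x ^+ 2))).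

(* N(x_{1:i}; theta_i) with frozen init (a, wb, bb) and offsets (w, b) *)
Definition netN m i (a : 'I_m -> R) (wb : 'I_m -> 'rV[R]_(i + 1)) (bb : 'I_m -> R)
  (w : 'I_m -> 'rV[R]_(i + 1)) (b : 'I_m -> R) (x : 'rV[R]_i) : R :=
  \sum_(r < m) a r * Num.max 0 (dotv (wb r + w r) (xhat x) + bb r + b r).

Definition rsign (s : bool) : R := if s then 1 else -1.

(* n * (empirical Rademacher complexity): E_xi [ sup_theta sum_j xi_j N(x_j; theta) ],
   xi uniform on {+-1}^n, sup over offsets with max_r |w_r|_2 <= B and |b_r| <= B *)
Definition rad_sum n m i (a : 'I_m -> R) (wb : 'I_m -> 'rV[R]_(i + 1)) (bb : 'I_m -> R)
  (B : R) (X : 'I_n -> 'rV[R]_i) : R :=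
  (2 ^+ n)^-1 * \sum_(xi : {ffun 'I_n -> bool})
    sup [set y | exists (w : 'I_m -> 'rV[R]_(i + 1)) (b : 'I_m -> R),
           (forall r, norm2 (w r) <= B /\ `|b r| <= B) /\
           y = \sum_(j < n) rsign (xi j) * netN a wb bb w b (X j)].

Definition mutually_independent d (T : measurableType d) (P : probability T R)
  (I : finType) (Z : I -> T -> R) : Prop :=
  forall A : I -> set R, (forall k, measurable (A k)) ->
    P (\bigcap_(k in [set: I]) (Z k @^-1` A k)) = (\prod_(k : I) P (Z k @^-1` A k))%E.

(* Z is a real random variable with law N(mu, sigma^2) (sigma = standard deviation) *)
Definition is_normal_rv d (T : measurableType d) (P : probability T R)
  (Z : T -> R) (mu sigma : R) : Prop :=
  measurable_fun setT Z /\
  forall A : set R, measurable A -> P (Z @^-1` A) = normal_prob mu sigma A.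

(* The combined family of all scalar initialization variables:
   inl (r, 0) |-> a_r, inl (r, 1) |-> bb_r, inr (r, k) |-> (wb_r)_k *)
Definition init_family d (T : measurableType d) m i
  (a bb : 'I_m -> T -> R) (wb : 'I_m -> 'I_(i + 1) -> T -> R)
  (p : ('I_m * 'I_2) + ('I_m * 'I_(i + 1))) : T -> R :=
  match p with
  | inl (r, k) => if nat_of_ord k == 0%N then a r else bb r
  | inr (r, k) => wb r k
  end.

End defs.

(* The supremum of a sum over the neurons is at most
   the sum of the suprema, so each neuron r can be treated separately.  As
   z |-> a_r max(0, z) is |a_r|-Lipschitz, the contraction principle (on the
   finite sign cube it follows by flipping one sign at a time) replaces it by
   z |-> |a_r| z.  The resulting linear supremum is at most
   |a_r| B (E ||sum_j xi_j xhat_j|| + E |sum_j xi_j|) <= 2 |a_r| B sqrt n,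
   because ||xhat_j|| = 1 and E (sum_j xi_j c_j)^2 = sum_j c_j^2.  Hence
   n times the Rademacher complexity is at most 2 B sqrt n sum_r |a_r|.
   Finally, a Gaussian tail bound and a union bound show that with probability
   at least 1 - 1/c1 every |a_r| is at most 4 c1 eps_a sqrt (2 ln m). *)

From HB Require Import structures.
From mathcomp Require Import all_boot all_order all_algebra.
From mathcomp Require Import all_classical all_reals all_analysis.
From mathcomp Require Import ring lra measurable_realfun.
Import Order.TTheory GRing.Theory Num.Theory.
Local Open Scope classical_set_scope.
Local Open Scope ring_scope.
Set Implicit Arguments. Unset Strict Implicit. Unset Printing Implicit Defensive.

Section RademacherSums.
Context {R : realType} (n : nat).
Local Notation signs := {ffun 'I_n -> bool}.
Implicit Types (xi : signs) (c : 'I_n -> R).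

Definition flip_sign (k : 'I_n) xi : signs :=
  [ffun j => if j == k then ~~ xi j else xi j].

Lemma flip_signK k : involutive (flip_sign k).
Proof.
by move=> xi; apply/ffunP => j; rewrite !ffunE; case: eqP => // ->; rewrite negbK.
Qed.

Lemma rsign_flip_sign k xi j :
  rsign (flip_sign k xi j) = if j == k then - rsign (xi j) else rsign (xi j) :> R.
Proof. by rewrite ffunE; case: eqP => // _; case: (xi j); rewrite /rsign ?opprK. Qed.

Lemma normr_rsign (b : bool) : `|rsign b| = 1 :> R.
Proof. by case: b; rewrite /rsign ?normrN normr1. Qed.

Lemma rsign_sqr (b : bool) : rsign b ^+ 2 = 1 :> R.
Proof. by case: b; rewrite /rsign ?sqrrN expr1n. Qed.

Lemma sum_flip_sign k (F : signs -> R) :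
  \sum_(xi : signs) F (flip_sign k xi) = \sum_(xi : signs) F xi.
Proof. by rewrite [RHS](reindex_inj (inv_inj (flip_signK k))). Qed.

Lemma sum_flip_odd k (F : signs -> R) :
  (forall xi, F (flip_sign k xi) = - F xi) -> \sum_(xi : signs) F xi = 0.
Proof.
move=> Fodd; apply/eqP; set S := \sum_(xi : signs) F xi.
rewrite -[S == 0](mulrn_eq0 S 2) mulr2n {2}/S -(sum_flip_sign k) -big_split.
by rewrite big1 // => xi _; rewrite /= Fodd subrr.
Qed.

Lemma sum_signs_const (x : R) : \sum_(xi : signs) x = 2 ^+ n * x.
Proof. by rewrite sumr_const card_ffun card_bool card_ord -[LHS]mulr_natl natrX. Qed.

Lemma sum_rsign k : \sum_(xi : signs) rsign (xi k) = 0 :> R.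
Proof. by apply: (sum_flip_odd (k := k)) => xi; rewrite rsign_flip_sign eqxx. Qed.

Lemma sum_rsignM j k :
  \sum_(xi : signs) rsign (xi j) * rsign (xi k) = if j == k then 2 ^+ n else 0 :> R.
Proof.
have [<-|/negPf jk] := eqVneq j k.
  by rewrite (eq_bigr (fun=> 1)) => [|xi _]; rewrite ?sum_signs_const ?mulr1 -?expr2 ?rsign_sqr.
apply: (sum_flip_odd (k := j)) => xi.
by rewrite !rsign_flip_sign eqxx eq_sym jk mulNr.
Qed.

Lemma sum_rsign_flip_sign k xi (F : 'I_n -> R) :
  \sum_j rsign (flip_sign k xi j) * F j =
  - rsign (xi k) * F k + \sum_(j | j != k) rsign (xi j) * F j.
Proof.
rewrite (bigD1 k) //= rsign_flip_sign eqxx; congr (_ + _).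
by apply: eq_bigr => j /negPf jk; rewrite rsign_flip_sign jk.
Qed.

Lemma sum_rademacher_eq0 c : \sum_(xi : signs) \sum_j rsign (xi j) * c j = 0.
Proof. by rewrite exchange_big big1 // => j _; rewrite -mulr_suml sum_rsign mul0r. Qed.

Lemma sum_rademacher_sqr c :
  \sum_(xi : signs) (\sum_j rsign (xi j) * c j) ^+ 2 = 2 ^+ n * \sum_j c j ^+ 2.
Proof.
transitivity (\sum_(xi : signs) \sum_j \sum_k rsign (xi j) * rsign (xi k) * (c j * c k)).
  apply: eq_bigr => xi _; rewrite expr2 mulr_suml; apply: eq_bigr => j _.
  by rewrite mulr_sumr; apply: eq_bigr => k _; ring.
rewrite exchange_big mulr_sumr; apply: eq_bigr => j _.
rewrite exchange_big (bigD1 j) //= [X in _ + X]big1 => [|k /negPf kj]; last first.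
  by rewrite -mulr_suml sum_rsignM eq_sym kj mul0r.
by rewrite -mulr_suml sum_rsignM eqxx addr0 expr2.
Qed.

End RademacherSums.

Section CauchySchwarz.
Context {R : realType}.

Lemma sum_mul_sqr_le (I : finType) (u v : I -> R) :
  (\sum_i u i * v i) ^+ 2 <= (\sum_i u i ^+ 2) * (\sum_i v i ^+ 2).
Proof.
set A := \sum_i _ ^+ 2; set B := \sum_i _ ^+ 2; set C := \sum_i _.
have B0 : 0 <= B by apply: sumr_ge0 => i _; exact: sqr_ge0.
have [B_eq0|B_neq0] := eqVneq B 0.
  have v0 i : v i = 0.
    by apply/eqP; rewrite -sqrf_eq0; apply/eqP/(psumr_eq0P _ B_eq0) => // j _; exact: sqr_ge0.
  by rewrite /C big1 ?expr0n ?B_eq0 ?mulr0 // => i _; rewrite v0 mulr0.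
have B_gt0 : 0 < B by rewrite lt_def B_neq0.
have : 0 <= B * (A * B - C ^+ 2).
  have -> : B * (A * B - C ^+ 2) = \sum_i (B * u i - C * v i) ^+ 2.
    rewrite (eq_bigr (fun i => B ^+ 2 * u i ^+ 2 - 2 * B * C * (u i * v i) + C ^+ 2 * v i ^+ 2));
      last by move=> i _; ring.
    by rewrite !big_split /= sumrN -!mulr_sumr -/A -/B -/C; ring.
  by apply: sumr_ge0 => i _; exact: sqr_ge0.
by rewrite pmulr_rge0 // subr_ge0.
Qed.

Lemma ler_sum_sqrt (I : finType) (x : I -> R) :
  \sum_i x i <= Num.sqrt (#|I|%:R * \sum_i x i ^+ 2).
Proof.
rewrite mulrC; apply: le_trans (ler_norm _) _; rewrite -sqrtr_sqr ler_wsqrtr //.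
have := sum_mul_sqr_le x (fun=> 1).
by rewrite (eq_bigr x) => [|i _]; rewrite ?mulr1 // sumr_const expr1n.
Qed.

Lemma norm2_ge0 k (u : 'rV[R]_k) : 0 <= norm2 u.
Proof. exact: sqrtr_ge0. Qed.

Lemma norm2_sqr k (u : 'rV[R]_k) : norm2 u ^+ 2 = \sum_l u 0 l ^+ 2.
Proof. by rewrite sqr_sqrtr //; apply: sumr_ge0 => l _; exact: sqr_ge0. Qed.

Lemma norm2_0 k : norm2 (0 : 'rV[R]_k) = 0.
Proof. by rewrite /norm2 big1 ?sqrtr0 // => l _; rewrite mxE expr0n. Qed.

Lemma ler_norm_dotv k (u v : 'rV[R]_k) : `|dotv u v| <= norm2 u * norm2 v.
Proof.
rewrite -sqrtrM; last by apply: sumr_ge0 => l _; exact: sqr_ge0.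
by rewrite -sqrtr_sqr ler_wsqrtr // sum_mul_sqr_le.
Qed.

Lemma dotv_le k (u v : 'rV[R]_k) : dotv u v <= norm2 u * norm2 v.
Proof. exact: le_trans (ler_norm _) (ler_norm_dotv u v). Qed.

Lemma dotvDl k (u w v : 'rV[R]_k) : dotv (u + w) v = dotv u v + dotv w v.
Proof. by rewrite /dotv -big_split; apply: eq_bigr => l _; rewrite mxE mulrDl. Qed.

Lemma dotv_sumr k n (w : 'rV[R]_k) (c : 'I_n -> R) (h : 'I_n -> 'rV[R]_k) :
  dotv w (\sum_j c j *: h j) = \sum_j c j * dotv w (h j).
Proof.
under [RHS]eq_bigr do rewrite mulr_sumr.
rewrite exchange_big; apply: eq_bigr => l _.
by rewrite summxE mulr_sumr; apply: eq_bigr => j _; rewrite mxE; ring.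
Qed.

End CauchySchwarz.

Lemma lipschitzP {R : realType} (L : R) (f : R -> R) :
  L.-lipschitz f -> forall x y, `|f x - f y| <= L * `|x - y|.
Proof. by move=> hf x y; apply: (hf (x, y)). Qed.

Lemma lipschitz_scale {R : realType} (L : R) : 0 <= L -> L.-lipschitz ( *%R L).
Proof. by move=> L0 [x y] _ /=; rewrite -mulrBr normrM ger0_norm. Qed.

Lemma lipschitz_sign_le {R : realType} (L s a b : R) (f : R -> R) :
  L.-lipschitz f -> `|s| = 1 ->
  s * f a - s * f b <= s * (L * a) - s * (L * b) \/
  s * f a - s * f b <= s * (L * b) - s * (L * a).
Proof.
move=> /lipschitzP f_lip s1.
have : s * f a - s * f b <= L * `|s * (a - b)|.
  by rewrite -mulrBr normrM s1 !mul1r (le_trans (ler_norm _)) // normrM s1 mul1r.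
have [sab_ge0|sab_lt0] := lerP 0 (s * (a - b)).
  by rewrite ger0_norm //; left; lra.
by rewrite ltr0_norm //; right; lra.
Qed.

Section Contraction.
Context {R : realType} (Th : Type) (K : set Th) (n : nat) (t : 'I_n -> Th -> R)
  (M : 'I_n -> R) (L : R).
Hypotheses (K0 : K !=set0) (t_bounded : forall j th, K th -> `|t j th| <= M j)
  (L0 : 0 <= L).
Local Notation signs := {ffun 'I_n -> bool}.
Implicit Types (xi : signs) (f g : 'I_n -> R -> R).

Definition rademacher_image f xi : set R :=
  [set \sum_j rsign (xi j) * f j (t j th) | th in K].

Definition rademacher_sup f xi : R := sup (rademacher_image f xi).

Lemma has_sup_rademacher_image f xi :
  (forall j, L.-lipschitz (f j)) -> has_sup (rademacher_image f xi).
Proof.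
move=> f_lip; split; first by case: K0 => th Kth; exists (\sum_j rsign (xi j) * f j (t j th)), th.
exists (\sum_j (`|f j 0| + L * M j)) => _ [th Kth <-].
apply: le_trans (ler_norm _) _; apply: le_trans (ler_norm_sum _ _ _) _.
apply: ler_sum => j _; rewrite normrM normr_rsign mul1r.
have := lipschitzP (f_lip j) (t j th) 0; rewrite subr0 => f_le.
rewrite -[f j _](subrK (f j 0)) addrC (le_trans (ler_normD _ _)) // lerD2l.
by rewrite (le_trans f_le) // ler_wpM2l // t_bounded.
Qed.

Lemma rademacher_sup_ge f xi th : (forall j, L.-lipschitz (f j)) -> K th ->
  \sum_j rsign (xi j) * f j (t j th) <= rademacher_sup f xi.
Proof.
move=> f_lip Kth; apply: ub_le_sup; last by exists th.
by case: (has_sup_rademacher_image xi f_lip).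
Qed.

Section FlipStep.
Variables (k : 'I_n) (f g : 'I_n -> R -> R).
Hypotheses (f_lip : forall j, L.-lipschitz (f j)) (g_lip : forall j, L.-lipschitz (g j))
  (fg : forall j, j != k -> f j =1 g j) (gk : g k =1 *%R L).

Lemma rademacher_sup_flip_le xi :
  rademacher_sup f xi + rademacher_sup f (flip_sign k xi) <=
  rademacher_sup g xi + rademacher_sup g (flip_sign k xi).
Proof.
set C := rademacher_sup g xi + _.
pose s : R := rsign (xi k).
have s1 : `|s| = 1 := normr_rsign (xi k).
pose G th := \sum_(j | j != k) rsign (xi j) * f j (t j th).
have fG th : \sum_j rsign (xi j) * f j (t j th) = s * f k (t k th) + G th.
  by rewrite (bigD1 k).
have fG' th : \sum_j rsign (flip_sign k xi j) * f j (t j th) = - s * f k (t k th) + G th.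
  by rewrite sum_rsign_flip_sign.
have gG th : \sum_j rsign (xi j) * g j (t j th) = s * (L * t k th) + G th.
  by rewrite (bigD1 k) //= gk; congr (_ + _); apply: eq_bigr => j jk; rewrite fg.
have gG' th : \sum_j rsign (flip_sign k xi j) * g j (t j th) = - s * (L * t k th) + G th.
  by rewrite sum_rsign_flip_sign gk; congr (_ + _); apply: eq_bigr => j jk; rewrite fg.
have pair_le th1 th2 : K th1 -> K th2 ->
    (s * f k (t k th1) + G th1) + (- s * f k (t k th2) + G th2) <= C.
  move=> K1 K2; have [h|h] := lipschitz_sign_le (t k th1) (t k th2) (f_lip k) s1.
  - apply: le_trans (lerD (rademacher_sup_ge xi g_lip K1)
                          (rademacher_sup_ge (flip_sign k xi) g_lip K2)).
    by rewrite gG gG'; lra.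
  - apply: le_trans (lerD (rademacher_sup_ge xi g_lip K2)
                          (rademacher_sup_ge (flip_sign k xi) g_lip K1)).
    by rewrite gG gG'; lra.
have [ne1 _] := has_sup_rademacher_image xi f_lip.
have [ne2 _] := has_sup_rademacher_image (flip_sign k xi) f_lip.
rewrite -lerBrDr; apply: ge_sup => // _ [th1 K1 <-].
rewrite lerBrDr addrC -lerBrDr; apply: ge_sup => // _ [th2 K2 <-].
by rewrite fG fG'; have := pair_le _ _ K1 K2; lra.
Qed.

Lemma sum_rademacher_sup_flip_le :
  \sum_(xi : signs) rademacher_sup f xi <= \sum_(xi : signs) rademacher_sup g xi.
Proof.
have pair_sum (F : signs -> R) : \sum_xi F xi = (\sum_xi (F xi + F (flip_sign k xi))) / 2.
  by rewrite big_split /= sum_flip_sign; field.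
rewrite (pair_sum (rademacher_sup f)) (pair_sum (rademacher_sup g)).
by rewrite ler_pM2r // ler_sum // => xi _; exact: rademacher_sup_flip_le.
Qed.

End FlipStep.

Theorem sum_rademacher_sup_contraction f : (forall j, L.-lipschitz (f j)) ->
  \sum_(xi : signs) rademacher_sup f xi <= \sum_(xi : signs) rademacher_sup (fun=> *%R L) xi.
Proof.
move=> f_lip.
pose mix (k : nat) (j : 'I_n) : R -> R := if (j < k)%N then *%R L else f j.
have mix_lip k j : L.-lipschitz (mix k j).
  by rewrite /mix; case: ifP => _; [exact: lipschitz_scale | exact: f_lip].
suff mix_le k : (k <= n)%N ->
    \sum_(xi : signs) rademacher_sup (mix 0%N) xi <= \sum_(xi : signs) rademacher_sup (mix k) xi.
  have -> : f = mix 0%N by apply/funext.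
  have -> : (fun=> *%R L) = mix n by apply/funext => j; rewrite /mix ltn_ord.
  exact: mix_le.
elim: k => [|k IHk] kn //; apply: le_trans (IHk (ltnW kn)) _.
apply: (@sum_rademacher_sup_flip_le (Ordinal kn)) => // [j jk x|x].
  have /negPf jk' : nat_of_ord j != k by apply: contra jk => /eqP jk; apply/eqP/val_inj.
  by rewrite /mix [(j < k.+1)%N]ltnS [(j <= k)%N]leq_eqVlt jk'.
by rewrite /mix ltnSn.
Qed.

End Contraction.

Section RademacherAverages.
Context {R : realType} (n : nat).
Local Notation signs := {ffun 'I_n -> bool}.

Lemma sum_signs_le_sqrt (x : signs -> R) (S : R) :
  0 <= S -> \sum_xi x xi ^+ 2 = 2 ^+ n * S -> \sum_xi x xi <= 2 ^+ n * Num.sqrt S.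
Proof.
move=> S0 sum_sqr; apply: le_trans (ler_sum_sqrt x) _.
rewrite sum_sqr card_ffun card_bool card_ord natrX mulrA -expr2 sqrtrM ?sqr_ge0 //.
by rewrite sqrtr_sqr ger0_norm // exprn_ge0.
Qed.

Lemma sum_rademacher_abs_le (c : 'I_n -> R) :
  \sum_(xi : signs) `|\sum_j rsign (xi j) * c j| <= 2 ^+ n * Num.sqrt (\sum_j c j ^+ 2).
Proof.
apply: sum_signs_le_sqrt; first by apply: sumr_ge0 => j _; exact: sqr_ge0.
by under eq_bigr do rewrite real_normK ?num_real //; rewrite sum_rademacher_sqr.
Qed.

Lemma sum_rademacher_norm2_le k (h : 'I_n -> 'rV[R]_k) :
  \sum_(xi : signs) norm2 (\sum_j rsign (xi j) *: h j) <=
  2 ^+ n * Num.sqrt (\sum_j norm2 (h j) ^+ 2).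
Proof.
apply: sum_signs_le_sqrt; first by apply: sumr_ge0 => j _; exact: sqr_ge0.
transitivity (\sum_l \sum_(xi : signs) (\sum_j rsign (xi j) * h j 0 l) ^+ 2).
  rewrite exchange_big; apply: eq_bigr => xi _; rewrite norm2_sqr.
  by apply: eq_bigr => l _; rewrite summxE; congr (_ ^+ 2); apply: eq_bigr => j _; rewrite mxE.
under eq_bigr do rewrite sum_rademacher_sqr.
rewrite -mulr_sumr exchange_big /=.
by congr (_ * _); apply: eq_bigr => j _; rewrite norm2_sqr.
Qed.

End RademacherAverages.

Section Features.
Context {R : realType}.

Lemma norm2_xprefix_le d i (hid : (i <= d)%N) (x : 'rV[R]_d) :
  norm2 (xprefix hid x) <= norm2 x.
Proof.
rewrite ler_wsqrtr // /xprefix.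
under eq_bigr do rewrite mxE.
rewrite -(big_ord_narrow_cond (P := predT) (F := fun l => x 0 l ^+ 2)).
rewrite [leRHS](bigID (fun l : 'I_d => (l < i)%N)) /= lerDl.
by apply: sumr_ge0 => l _; exact: sqr_ge0.
Qed.

Lemma norm2_xhat i (y : 'rV[R]_i) : norm2 y <= 1 -> norm2 (xhat y) = 1.
Proof.
move=> y_le1; rewrite /norm2 big_split_ord /= big_ord1.
under eq_bigr do rewrite row_mxEl.
have y2_le1 : 0 <= 1 - norm2 y ^+ 2 by rewrite subr_ge0 expr_le1 // norm2_ge0.
by rewrite row_mxEr mxE sqr_sqrtr // norm2_sqr addrC subrK sqrtr1.
Qed.

End Features.

Lemma lipschitz_scale_relu {R : realType} (c : R) :
  `|c|.-lipschitz (fun z : R => c * Num.max 0 z).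
Proof.
move=> [x y] _ /=; rewrite -mulrBr normrM ler_wpM2l //.
have xy_le : x - y <= `|x - y| by exact: ler_norm.
have yx_le : y - x <= `|x - y| by rewrite distrC; exact: ler_norm.
rewrite ler_norml; move: xy_le yx_le; set N := `|x - y|.
by rewrite /Order.max; case: ifP => ?; case: ifP => ? *; apply/andP; split; lra.
Qed.

Section NetworkBound.
Context {R : realType} (m i n : nat) (a : 'I_m -> R) (wb : 'I_m -> 'rV[R]_(i + 1))
  (bb : 'I_m -> R) (B : R) (X : 'I_n -> 'rV[R]_i).
Hypotheses (B0 : 0 <= B) (X_le1 : forall j, norm2 (xhat (X j)) <= 1).
Local Notation signs := {ffun 'I_n -> bool}.
Local Notation h j := (xhat (X j)).

Definition offset_ball : set ('rV[R]_(i + 1) * R) :=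
  [set p | norm2 p.1 <= B /\ `|p.2| <= B].

Definition preactivation r j (p : 'rV[R]_(i + 1) * R) : R :=
  dotv (wb r + p.1) (h j) + bb r + p.2.

Let offset_ball0 : offset_ball !=set0.
Proof. by exists (0, 0); rewrite /offset_ball /= norm2_0 normr0. Qed.

Let preactivation_bounded r j p : offset_ball p ->
  `|preactivation r j p| <= `|dotv (wb r) (h j)| + B + `|bb r| + B.
Proof.
case=> w_le b_le; rewrite /preactivation dotvDl.
do 3 apply: le_trans (ler_normD _ _) (lerD _ _) => //.
apply: le_trans (ler_norm_dotv _ _) _.
by rewrite -[B]mulr1 ler_pM // ?norm2_ge0.
Qed.

Local Notation neuron_sup r f := (rademacher_sup offset_ball (preactivation r) f).

Lemma sup_net_le_sum_neurons (xi : signs) :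
  sup [set y | exists (w : 'I_m -> 'rV[R]_(i + 1)) (b : 'I_m -> R),
         (forall r, norm2 (w r) <= B /\ `|b r| <= B) /\
         y = \sum_j rsign (xi j) * netN a wb bb w b (X j)]
  <= \sum_r neuron_sup r (fun _ z => a r * Num.max 0 z) xi.
Proof.
apply: ge_sup.
  exists (\sum_j rsign (xi j) * netN a wb bb (fun=> 0) (fun=> 0) (X j)).
  by exists (fun=> 0), (fun=> 0); split => // r; rewrite norm2_0 normr0.
move=> _ [w [b [wb_le ->]]].
under eq_bigr do rewrite /netN mulr_sumr.
rewrite exchange_big /=; apply: ler_sum => r _.
exact: (rademacher_sup_ge offset_ball0 (preactivation_bounded r)
          (normr_ge0 (a r)) xi (th := (w r, b r)) (fun=> lipschitz_scale_relu (a r)) (wb_le r)).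
Qed.

Lemma neuron_sup_linear_le r (xi : signs) :
  neuron_sup r (fun=> *%R `|a r|) xi <=
  `|a r| * (\sum_j rsign (xi j) * (dotv (wb r) (h j) + bb r) +
            B * norm2 (\sum_j rsign (xi j) *: h j) + B * `|\sum_j rsign (xi j) * 1|).
Proof.
have [ne _] := has_sup_rademacher_image offset_ball0 (preactivation_bounded r)
  (normr_ge0 (a r)) xi (fun=> lipschitz_scale (normr_ge0 (a r))).
apply: ge_sup => // _ [[w b] [/= w_le b_le] <-].
have -> : \sum_j rsign (xi j) * (`|a r| * preactivation r j (w, b)) =
    `|a r| * (\sum_j rsign (xi j) * (dotv (wb r) (h j) + bb r) +
              dotv w (\sum_j rsign (xi j) *: h j) + b * \sum_j rsign (xi j) * 1).
  rewrite dotv_sumr mulr_sumr -!big_split mulr_sumr /=.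
  by apply: eq_bigr => j _; rewrite /preactivation dotvDl /=; ring.
rewrite ler_wpM2l // -!addrA lerD2l lerD //.
  by apply: le_trans (dotv_le _ _) _; rewrite ler_wpM2r // norm2_ge0.
by apply: le_trans (ler_norm _) _; rewrite normrM ler_wpM2r.
Qed.

Theorem rad_sum_le :
  rad_sum a wb bb B X <= (\sum_r `|a r|) * (2 * B * Num.sqrt n%:R).
Proof.
have sqrt_sum_le (c : 'I_n -> R) : (forall j, c j ^+ 2 <= 1) ->
    Num.sqrt (\sum_j c j ^+ 2) <= Num.sqrt n%:R.
  move=> c_le1; rewrite ler_wsqrtr // -[n in n%:R]card_ord -sumr_const.
  exact: ler_sum.
have h_le := sqrt_sum_le (fun j => norm2 (h j))
  (fun j => exprn_ile1 _ (norm2_ge0 _) (X_le1 j)).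
have one_le : Num.sqrt (\sum_(j < n) (1 : R) ^+ 2) <= Num.sqrt n%:R.
  by apply: (sqrt_sum_le (fun=> 1)) => j; rewrite expr1n.
rewrite /rad_sum ler_pdivrMl ?exprn_gt0 //.
apply: le_trans (ler_sum _ (fun xi _ => sup_net_le_sum_neurons xi)) _.
rewrite exchange_big mulr_suml mulr_sumr; apply: ler_sum => r _.
apply: le_trans (sum_rademacher_sup_contraction offset_ball0 (preactivation_bounded r)
  (normr_ge0 (a r)) (fun=> lipschitz_scale_relu (a r))) _.
apply: le_trans (ler_sum _ (fun xi _ => neuron_sup_linear_le r xi)) _.
rewrite -mulr_sumr !big_split /= sum_rademacher_eq0 add0r -!mulr_sumr.
have p2n : 0 <= (2 : R) ^+ n by rewrite exprn_ge0.
have S1 := le_trans (sum_rademacher_norm2_le (fun j => h j)) (ler_wpM2l p2n h_le).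
have S2 := le_trans (sum_rademacher_abs_le (fun=> 1)) (ler_wpM2l p2n one_le).
rewrite mulrCA ler_wpM2l // -mulrDr [2 * B]mulrC -mulrA mulrCA ler_wpM2l //.
by apply: le_trans (lerD S1 S2) _; lra.
Qed.

End NetworkBound.

Section GaussianTail.
Context {R : realType}.

Lemma normal_peak_sqrt2 (s : R) : 0 < s ->
  normal_peak s = Num.sqrt 2 * normal_peak (Num.sqrt 2 * s).
Proof.
move=> s_gt0; rewrite /normal_peak exprMn sqr_sqrtr //.
rewrite (_ : 2 * s ^+ 2 * pi *+ 2 = 2 * (s ^+ 2 * pi *+ 2)) ?sqrtrM //; last first.
  by rewrite mulrnAr !mulrA.
have sqrt2_neq0 : Num.sqrt 2 != 0 :> R by rewrite gt_eqF // sqrtr_gt0.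
have : Num.sqrt (s ^+ 2 * pi *+ 2) != 0.
  by rewrite gt_eqF // sqrtr_gt0 mulrn_wgt0 // mulr_gt0 ?pi_gt0 // exprn_gt0.
by move=> ?; field; apply/andP.
Qed.

(* The density of variance [2 s^2] decays at half the rate, which leaves
   [exp (- K^2 / (4 s^2))] to spare beyond [|x| >= K]. *)
Lemma normal_pdf_le_tail (s K x : R) : 0 < s -> K ^+ 2 <= x ^+ 2 ->
  normal_pdf 0 s x <=
  Num.sqrt 2 * expR (- K ^+ 2 / (s ^+ 2 * 4)) * normal_pdf 0 (Num.sqrt 2 * s) x.
Proof.
move=> s_gt0 K_le.
have s'_neq0 : Num.sqrt 2 * s != 0 by rewrite mulf_neq0 ?gt_eqF ?sqrtr_gt0.
have exp_le : - x ^+ 2 / (s ^+ 2 *+ 2) <=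
    - K ^+ 2 / (s ^+ 2 * 4) + - x ^+ 2 / ((Num.sqrt 2 * s) ^+ 2 *+ 2).
  rewrite exprMn sqr_sqrtr // -subr_ge0.
  have u_gt0 : 0 < s ^+ 2 by rewrite exprn_gt0.
  move: u_gt0; set u := s ^+ 2 => u_gt0.
  have -> : - K ^+ 2 / (u * 4) + - x ^+ 2 / (2 * u *+ 2) - - x ^+ 2 / (u *+ 2) =
      (x ^+ 2 - K ^+ 2) / (u * 4).
    by rewrite -(mulr_natr u 2) -(mulr_natr (2 * u) 2); field; rewrite gt_eqF.
  by rewrite divr_ge0 ?subr_ge0 // mulr_ge0 // ltW.
rewrite /normal_pdf (negPf s'_neq0) gt_eqF // normal_peak_sqrt2 // /normal_fun !subr0.
set p := normal_peak _; set e := expR (- K ^+ 2 / _).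
rewrite (_ : _ * e * _ = Num.sqrt 2 * p * (e * expR (- x ^+ 2 / ((Num.sqrt 2 * s) ^+ 2 *+ 2)))).
  by rewrite ler_wpM2l ?mulr_ge0 ?sqrtr_ge0 ?normal_peak_ge0 // /e -expRD ler_expR.
by rewrite !mulrA (mulrAC _ e p).
Qed.

Lemma normal_prob_tail_le (s K : R) : 0 < s -> 0 <= K ->
  (normal_prob 0 s (~` `[(- K)%R, K]) <= (Num.sqrt 2 * expR (- K ^+ 2 / (s ^+ 2 * 4)))%:E)%E.
Proof.
move=> s_gt0 K_ge0; set c := Num.sqrt 2 * _.
have c_ge0 : 0 <= c by rewrite mulr_ge0 ?sqrtr_ge0 ?expR_ge0.
have mA : measurable (~` `[- K, K] : set R) by apply: measurableC.
set A := ~` _.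
have pdf_le : (\int[lebesgue_measure]_(x in A) (normal_pdf 0 s x)%:E <=
    \int[lebesgue_measure]_(x in A) (c%:E * (normal_pdf 0 (Num.sqrt 2 * s) x)%:E))%E.
  apply: ge0_le_integral => //.
  - by move=> x _; rewrite lee_fin normal_pdf_ge0.
  - by apply/measurable_EFinP; exact: measurable_funS (measurable_normal_pdf _ _).
  - apply/measurable_EFinP/measurable_funM => //.
    exact: measurable_funS (measurable_normal_pdf _ _).
  move=> x /= x_out; rewrite -EFinM lee_fin normal_pdf_le_tail //.
  rewrite -real_normK ?num_real // -[x ^+ 2]real_normK ?num_real // ler_pXn2r ?nnegrE //.
  rewrite ger0_norm //; apply: ltW; rewrite ltNge; apply: contra_notN x_out.
  by rewrite /= in_itv /= -ler_norml.
rewrite /normal_prob (le_trans pdf_le) // ge0_integralZl_EFin //.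
- rewrite -[leRHS]mule1 lee_wpmul2l ?lee_fin //.
  exact: (probability_le1 (normal_prob 0 (Num.sqrt 2 * s)) mA).
- by move=> x _; rewrite lee_fin normal_pdf_ge0.
- by apply/measurable_EFinP; exact: measurable_funS (measurable_normal_pdf _ _).
Qed.

End GaussianTail.

Section InitEvent.
Context {R : realType} d (T : measurableType d) (P : probability T R).

Lemma measure_bigsetU_le (I : Type) (s : seq I) (F : I -> set T) :
  (forall i, measurable (F i)) ->
  (P (\big[setU/set0]_(i <- s) F i) <= \sum_(i <- s) P (F i))%E.
Proof.
move=> mF; elim: s => [|i s IHs]; first by rewrite !big_nil measure0.
rewrite !big_cons (le_trans (measureU2 _ _ _)) ?leeD2l //.
by apply: bigsetU_measurable => j _.
Qed.

Lemma exists_event_normr_le m (a : 'I_m -> T -> R) (s K : R) :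
  (forall r, is_normal_rv P (a r) 0 s) -> 0 < s -> 0 <= K ->
  exists E : set T, measurable E /\
    ((1 - m%:R * (Num.sqrt 2 * expR (- K ^+ 2 / (s ^+ 2 * 4))))%:E <= P E)%E /\
    forall om, E om -> forall r, `|a r om| <= K.
Proof.
move=> a_normal s_gt0 K_ge0; set c := Num.sqrt 2 * _.
have mA : measurable (~` `[(- K)%R, K] : set R) by apply: measurableC.
pose tail r := a r @^-1` (~` `[(- K)%R, K]).
have m_tail r : measurable (tail r).
  by have := (a_normal r).1 measurableT _ mA; rewrite setTI.
pose U := \big[setU/set0]_(r < m) tail r.
have mU : measurable U by apply: bigsetU_measurable => r _.
exists (~` U); split; first exact: measurableC.
split; last first.
  move=> om notU r; rewrite leNgt; apply: contra_notN notU => K_lt.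
  rewrite /U (bigD1 r) //=; left; rewrite /tail /= in_itv /= -ler_norml.
  by apply/negP; rewrite -ltNge.
have PU_le : (P U <= (m%:R * c)%:E)%E.
  apply: le_trans (measure_bigsetU_le _ m_tail) _.
  apply: (@le_trans _ _ (\sum_(r < m) c%:E)%E).
    by apply: lee_sum => r _; rewrite /tail (a_normal r).2 // normal_prob_tail_le.
  by rewrite sumEFin sumr_const card_ord mulr_natl.
rewrite probability_setC // -(fineK (fin_num_measure P _ mU)) -EFinB lee_fin lerB //.
by rewrite -lee_fin fineK ?fin_num_measure.
Qed.

End InitEvent.

Section Numerics.
Context {R : realType}.

Lemma ln_nat_ge_half (m : nat) : (2 <= m)%N -> 1 / 2 <= ln (m%:R : R).
Proof.
move=> m2; have m_gt0 : (0 : R) < m%:R by rewrite ltr0n (leq_trans _ m2).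
have := expR_ge1Dx (- ln (m%:R : R)); rewrite expRN lnK ?posrE //.
have : m%:R^-1 <= (2 : R)^-1 by rewrite lef_pV2 ?posrE // ler_nat.
lra.
Qed.

Lemma gaussian_union_tail_le_inv (m : nat) (c : R) : (2 <= m)%N -> 1 <= c ->
  m%:R * (Num.sqrt 2 * expR (- (8 * c ^+ 2 * ln m%:R))) <= c^-1.
Proof.
move=> m2 c_ge1; have m_gt0 : (0 : R) < m%:R by rewrite ltr0n (leq_trans _ m2).
have L_ge := ln_nat_ge_half m2; set L := ln _ in L_ge *.
set y := (8 * c ^+ 2 - 1) * L.
have y_ge : 4 * c ^+ 2 - 1 / 2 <= y.
  have : 0 <= 8 * c ^+ 2 - 1 by rewrite subr_ge0 expr2; nra.
  by move=> c_ge; have := ler_wpM2l c_ge L_ge; rewrite /y; lra.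
have sqrt2_le2 : Num.sqrt (2 : R) <= 2.
  by rewrite -(@ler_pXn2r _ 2) ?nnegrE ?sqrtr_ge0 // sqr_sqrtr // expr2; lra.
rewrite -[in m%:R * _](lnK (x := m%:R)) ?posrE // -/L mulrCA -expRD.
rewrite (_ : L + - _ = - y); last by rewrite /y; ring.
rewrite expRN ler_pdivrMr ?expR_gt0 // mulrC ler_pdivlMr ?(lt_le_trans ltr01) //.
have := expR_ge1Dx y; have := sqrtr_ge0 (2 : R); nra.
Qed.

End Numerics.

Unset Implicit Arguments.

Theorem lemma18 (R : realType) (m d i : nat) (eps_a c1 : R)
  (dd : measure_display) (T : measurableType dd) (P : probability T R)
  (a bb : 'I_m -> T -> R) (wb : 'I_m -> 'I_(i + 1) -> T -> R) :
  (2 <= m)%N -> 0 < eps_a -> 10 < c1 -> (1 <= i)%N ->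
  forall hid : (i <= d)%N,
  (forall r, is_normal_rv P (a r) 0 eps_a) ->
  (forall r, is_normal_rv P (bb r) 0 (Num.sqrt (m%:R^-1))) ->
  (forall r k, is_normal_rv P (wb r k) 0 (Num.sqrt (m%:R^-1))) ->
  mutually_independent P (init_family a bb wb) ->
  forall (B : R) (n t : nat) (x : 'I_n -> 'rV[R]_d),
  0 < B -> (1 <= n)%N -> (1 <= t)%N ->
  (forall j, norm2 (x j) <= 1) ->
  exists E : set T, measurable E /\
    ((1 - c1^-1)%:E <= P E)%E /\
    forall om, E om ->
      n%:R^-1 *
        rad_sum (fun r => a r om) (fun r => \row_(k < i + 1) wb r k om)
          (fun r => bb r om) B (fun j => xprefix hid (x j))
      <= 8 * c1 * eps_a * B * m%:R * Num.sqrt (2 * ln m%:R) / Num.sqrt n%:R.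
Proof.
move=> m2 eps_gt0 c1_gt10 _ hid a_normal _ _ _ B n t x B_gt0 n_ge1 _ x_le1.
have two_ln_ge0 : 0 <= 2 * ln (m%:R : R) by have := ln_nat_ge_half (R := R) m2; lra.
set K := 4 * c1 * eps_a * Num.sqrt (2 * ln (m%:R : R)).
have K_ge0 : 0 <= K by rewrite !mulr_ge0 ?sqrtr_ge0 // ?ltW //; lra.
have [E [mE [PE E_le]]] := exists_event_normr_le a_normal eps_gt0 K_ge0.
exists E; split => //; split.
  apply: le_trans PE; rewrite lee_fin lerD2l lerN2.
  have -> : - K ^+ 2 / (eps_a ^+ 2 * 4) = - (8 * c1 ^+ 2 * ln m%:R).
    by rewrite !exprMn sqr_sqrtr //; field; rewrite gt_eqF.
  by apply: gaussian_union_tail_le_inv => //; lra.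
move=> om Eom.
have X_le1 j : norm2 (xhat (xprefix hid (x j))) <= 1.
  by rewrite norm2_xhat // (le_trans (norm2_xprefix_le _ _)).
have sum_a_le : \sum_r `|a r om| <= m%:R * K.
  rewrite mulr_natl -[m in K *+ m]card_ord -sumr_const.
  by apply: ler_sum => r _; exact: E_le.
set sn := Num.sqrt n%:R; have sn_gt0 : 0 < sn by rewrite sqrtr_gt0 ltr0n.
apply: le_trans (ler_wpM2l _ (rad_sum_le _ _ _ (ltW B_gt0) X_le1)) _.
  by rewrite invr_ge0.
apply: le_trans (ler_wpM2l _ (ler_wpM2r _ sum_a_le)) _.
- by rewrite invr_ge0.
- by rewrite !mulr_ge0 // ltW.
rewrite -[n%:R](sqr_sqrtr (ler0n _ n)) -/sn sqrtr_sqr gtr0_norm // /K.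
by rewrite le_eqVlt; apply/predU1l; field; rewrite gt_eqF.
Qed.
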